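(* Let $H = \{h_0 = 0_H, h_1, \dots, h_{t-1}\}$ be a finite abelian group with a fixed enumeration of its elements, and let $\boldsymbol{\lambda} = (\lambda_0,\dots,\lambda_{t-1})$ be a sequence of nonnegative integers. Suppose that for infinitely many primes $p$, every non-zero sum subset of type $\boldsymbol{\lambda}$ of $(\mathbb{Z}_p \times H) \setminus \{0_{\mathbb{Z}_p\times H}\}$ is sequenceable. Then there exists a positive integer $N(\boldsymbol{\lambda})$ such that for every abelian group $G$ with $\vartheta(G) > N(\boldsymbol{\lambda})$, every non-zero sum subset of type $\boldsymbol{\lambda}$ of $(G \times H) \setminus \{0_{G\times H}\}$ is sequenceable.
   Context: For an abelian group $G$, $\vartheta(G) = \min_{0_G \neq g \in G} o(g)$, where $o(g)$ is the order (cardinality of the cyclic subgroup generated by $g$, possibly infinite). For a finite subset $S$ of an abelian group with $|S| = k$, an ordering $(x_1,\dots,x_k)$ of $S$ has partial sums $(y_0,\dots,y_k)$ with $y_0 = 0$, $y_i = x_1+\cdots+x_i$. It is a sequencing if the $y_i$ are pairwise distinct, and a rotational sequencing if they are pairwise distinct except that $y_k = y_0 = 0$; $S$ is sequenceable if it has one or the other. $S$ is non-zero sum if the sum of its elements is nonzero. The type of a finite subset $S \subseteq G \times H$ is $(\lambda_0,\dots,\lambda_{t-1})$ where $\lambda_i$ is the number of elements of $S$ whose $H$-coordinate equals $h_i$. *)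

From HB Require Import structures.
From mathcomp Require Import all_boot all_order all_algebra.
Set Implicit Arguments. Unset Strict Implicit. Unset Printing Implicit Defensive.
Import GRing.Theory.
Local Open Scope ring_scope.

Definition has_order {V : zmodType} (g : V) (n : nat) : Prop :=
  (0 < n)%N /\ g *+ n = 0 /\ (forall k : nat, (0 < k < n)%N -> g *+ k != 0).
Definition infinite_order {V : zmodType} (g : V) : Prop :=
  forall k : nat, (0 < k)%N -> g *+ k != 0.

(* theta(V) > N, i.e. min_{g <> 0} o(g) > N: every non-zero element has
   order (possibly infinite) strictly larger than N. *)
Definition theta_gt (V : zmodType) (N : nat) : Prop :=
  forall g : V, g != 0 -> infinite_order g \/ exists n, has_order g n /\ (N < n)%N.

Definition psums {V : zmodType} (xs : seq V) : seq V :=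
  mkseq (fun i => \sum_(x <- take i xs) x) (size xs).+1.

Definition is_sequencing {V : zmodType} (xs : seq V) : bool := uniq (psums xs).
Definition is_rotational_sequencing {V : zmodType} (xs : seq V) : bool :=
  (\sum_(x <- xs) x == 0) && uniq (take (size xs) (psums xs)).

(* a finite set S (given as a duplicate-free list s) is sequenceable if some
   ordering of its elements is a sequencing or a rotational sequencing *)
Definition sequenceable {V : zmodType} (s : seq V) : Prop :=
  exists xs : seq V, perm_eq xs s /\
    (is_sequencing xs \/ is_rotational_sequencing xs).

Definition all_nzs_type_sequenceable (G : zmodType) (H : finZmodType) (t : nat)
    (h : 'I_t -> H) (lam : 'I_t -> nat) : Prop :=
  forall s : seq (G * H)%type,
    uniq s -> (0 : G * H) \notin s ->
    (\sum_(x <- s) x != 0) ->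
    (forall i : 'I_t, count (fun x : G * H => x.2 == h i) s = lam i) ->
    sequenceable s.

(* Sequenceability of a family x_1, ..., x_k in an abelian group, as well as
   the hypotheses "distinct, non-zero, non-zero sum, of type lambda", depend
   only on the H-coordinates and on which subset sums of the x_l coincide.
   Let g_l be the G-coordinates.  A signed subset sum c.g that does not vanish
   cannot lie in the rational span of the vanishing ones: otherwise m (c.g) = 0
   for some 0 < m bounded in terms of k only, which is excluded when every
   non-zero element of G has order > N.  Hence some rational vector is
   orthogonal to exactly the vanishing coefficient vectors; clearing
   denominators yields w in Z^k with the same subset-sum coincidences as g,
   and so does w mod p for a prime p > sum |w_l|.  Sequencings of the
   corresponding subset of Z_p x H then pull back to G x H. *)

From mathcomp Require Import all_boot all_order all_algebra.
Set Implicit Arguments. Unset Strict Implicit. Unset Printing Implicit Defensive.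
Import Order.TTheory GRing.Theory Num.Theory.
Local Open Scope ring_scope.

Lemma perm_map_preimage (T U : eqType) (f : T -> U) (t : seq U) (u : seq T) :
  perm_eq t (map f u) -> exists2 r, perm_eq r u & t = map f r.
Proof.
elim: t u => [|a t IHt] u tu.
  by case: u tu => [|b u]; [exists [::] | rewrite perm_sym => /perm_nilP].
have /mapP[b bu Ea] : a \in map f u by rewrite -(perm_mem tu) mem_head.
rewrite {a}Ea in tu *.
have ub := perm_to_rem bu.
have /IHt[r r_perm ->] : perm_eq t (map f (rem b u)).
  by rewrite -(perm_cons (f b)) (perm_trans tu) // (perm_map f ub).
by exists (b :: r); rewrite // perm_sym (perm_trans ub) // perm_cons perm_sym.
Qed.

Lemma eq_in_uniq_map (T U U' : eqType) (f : T -> U) (f' : T -> U') (s : seq T) :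
  {in s &, forall a b, (f a == f b) = (f' a == f' b)} ->
  uniq (map f s) = uniq (map f' s).
Proof.
elim: s => //= a s IHs eqf.
have eqf_s : {in s &, forall b c, (f b == f c) = (f' b == f' c)}.
  by move=> b c bs cs; apply: eqf; rewrite inE ?bs ?cs orbT.
rewrite IHs //; congr (~~ _ && _).
apply/mapP/mapP => -[b bs /eqP Eab]; exists b => //; apply/eqP.
  by rewrite -eqf ?mem_head ?inE ?bs ?orbT.
by rewrite eqf ?mem_head ?inE ?bs ?orbT.
Qed.

Definition subset_sum_equiv {V W : zmodType} k (x : 'I_k -> V) (y : 'I_k -> W) :=
  forall P Q : {set 'I_k},
    (\sum_(l in P) x l == \sum_(l in Q) x l) = (\sum_(l in P) y l == \sum_(l in Q) y l).

Lemma psums_map (U : zmodType) k (z : 'I_k -> U) (r : seq 'I_k) : uniq r ->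
  psums (map z r) = mkseq (fun i => \sum_(l in [set l in take i r]) z l) (size r).+1.
Proof.
move=> ur; rewrite /psums size_map; apply: eq_mkseq => i.
rewrite -map_take big_map big_uniq ?take_uniq //.
by apply: eq_bigl => l; rewrite inE.
Qed.

Section SubsetSumEquiv.
Variables (V W : zmodType) (k : nat) (x : 'I_k -> V) (y : 'I_k -> W).
Hypothesis xy : subset_sum_equiv x y.

Lemma subset_sum_equiv_sym : subset_sum_equiv y x.
Proof. by move=> P Q; rewrite xy. Qed.

Lemma subset_sum_equiv_eq i j : (x i == x j) = (y i == y j).
Proof. by have := xy [set i] [set j]; rewrite !big_set1. Qed.

Lemma subset_sum_equiv_eq0 i : (x i == 0) = (y i == 0).
Proof. by have := xy [set i] set0; rewrite !big_set1 !big_set0. Qed.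

Lemma subset_sum_equiv_sum_eq0 : (\sum_l x l == 0) = (\sum_l y l == 0).
Proof. by have := xy setT set0; rewrite !big_set0 !(eq_bigl _ _ (@in_setT _)). Qed.

Lemma subset_sum_equiv_sequencing r : uniq r ->
  is_sequencing (map x r) = is_sequencing (map y r).
Proof.
move=> ur; rewrite /is_sequencing !psums_map //.
by apply: eq_in_uniq_map => i j _ _; exact: xy.
Qed.

Lemma subset_sum_equiv_rotational r : uniq r ->
  is_rotational_sequencing (map x r) = is_rotational_sequencing (map y r).
Proof.
move=> ur; rewrite /is_rotational_sequencing !psums_map // !size_map.
rewrite /mkseq -!map_take take_iota (minn_idPl (leqnSn _)).
have sum_set (U : zmodType) (z : 'I_k -> U) :
    \sum_(u <- map z r) u = \sum_(l in [set l in take (size r) r]) z l.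
  by rewrite take_size big_map big_uniq //; apply: eq_bigl => l; rewrite inE.
congr (_ && _); last by apply: eq_in_uniq_map => i j _ _; exact: xy.
by rewrite !sum_set; have := xy [set l in take (size r) r] set0; rewrite !big_set0.
Qed.

Lemma subset_sum_equiv_sequenceable : sequenceable (codom x) -> sequenceable (codom y).
Proof.
case=> xs [+ seq_xs]; rewrite codomE => /perm_map_preimage[r re Exs].
have ur : uniq r by rewrite (perm_uniq re) enum_uniq.
exists (map y r); split; first exact: perm_map.
by rewrite -subset_sum_equiv_sequencing // -subset_sum_equiv_rotational // -Exs.
Qed.

End SubsetSumEquiv.

Lemma subset_sum_equiv_trans (U V W : zmodType) k (x : 'I_k -> U) (y : 'I_k -> V)
    (z : 'I_k -> W) :
  subset_sum_equiv x y -> subset_sum_equiv y z -> subset_sum_equiv x z.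
Proof. by move=> xy yz P Q; rewrite xy yz. Qed.

Lemma subset_sum_equiv_pair (G V H : zmodType) k (x : 'I_k -> G * H) (w : 'I_k -> V) :
  subset_sum_equiv (fun l => (x l).1) w -> subset_sum_equiv x (fun l => (w l, (x l).2)).
Proof.
move=> xw P Q.
have sum_pair (U1 U2 : zmodType) (z : 'I_k -> U1 * U2) (R : {set 'I_k}) :
    \sum_(l in R) z l = (\sum_(l in R) (z l).1, \sum_(l in R) (z l).2).
  by rewrite [LHS]surjective_pairing !raddf_sum.
by rewrite !sum_pair !xpair_eqE xw.
Qed.

Lemma nzs_type_sequenceable_transfer (G V : zmodType) (H : finZmodType) t
    (h : 'I_t -> H) (lam : 'I_t -> nat) k (x : 'I_k -> G * H) (y : 'I_k -> V * H) :
    all_nzs_type_sequenceable V h lam -> subset_sum_equiv x y ->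
    (forall l, (y l).2 = (x l).2) ->
    uniq (codom x) -> (0 : G * H) \notin codom x -> \sum_(z <- codom x) z != 0 ->
    (forall i, count (fun z : G * H => z.2 == h i) (codom x) = lam i) ->
  sequenceable (codom x).
Proof.
move=> seqV xy yx2 ux x0 xsum xtype.
have yx := subset_sum_equiv_sym xy.
apply: (subset_sum_equiv_sequenceable yx); apply: seqV.
- rewrite codomE (eq_in_uniq_map (f' := x)) -?codomE // => a b _ _.
  exact: subset_sum_equiv_eq.
- apply: contra x0 => /codomP[l yl0]; apply/codomP; exists l.
  by apply/esym/eqP; rewrite (subset_sum_equiv_eq0 xy) -yl0.
- by move: xsum; rewrite !big_image (subset_sum_equiv_sum_eq0 xy).
- by move=> i; rewrite -xtype !codomE !count_map; apply: eq_count => l /=; rewrite yx2.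
Qed.

Lemma affine_common_nonroot (F : numFieldType) (T : eqType) (a b : T -> F) (s : seq T) :
  exists c : F, {in s, forall t, (a t != 0) || (b t != 0) -> a t + c * b t != 0}.
Proof.
(* Terms with [b t = 0] contribute [`|a t| / 0 = 0]. *)
pose c := 1 + \sum_(t <- s) `|a t| / `|b t|.
exists c => t ts nz_ab; have [bt0 | bt0] := eqVneq (b t) 0.
  by move: nz_ab; rewrite bt0 eqxx orbF mulr0 addr0.
have c_ge : `|a t| / `|b t| + 1 <= c.
  rewrite addrC lerD2l (big_rem t ts) /= lerDl sumr_ge0 // => u _.
  by rewrite divr_ge0.
have c_ge0 : 0 <= c by rewrite (le_trans _ c_ge) // addr_ge0 ?divr_ge0.
apply/eqP => abt; move: c_ge.
have -> : c = `|a t| / `|b t|.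
  have nz_bt : `|b t| != 0 by rewrite normr_eq0.
  rewrite -[c](mulfK nz_bt) -{1}(ger0_norm c_ge0) -normrM -normrN.
  by rewrite -[- _]add0r -abt addrK.
by rewrite gerDl ler10.
Qed.

Section KernelVectors.
Variables (F : numFieldType) (m k : nat) (S : 'M[F]_(m, k)).

Lemma kernel_vector_notin (v : 'rV_k) :
  ~~ (v <= S)%MS -> exists2 x : 'cV_k, S *m x = 0 & (v *m x) 0 0 != 0.
Proof.
rewrite submxE => /rV0Pn[j vj]; exists (col j (cokermx S)).
  by rewrite colE mulmxA mulmx_coker mul0mx.
by rewrite colE mulmxA -colE mxE.
Qed.

Lemma kernel_vector_avoiding (vs : seq 'rV_k) :
    {in vs, forall v, ~~ (v <= S)%MS} ->
  exists2 x : 'cV_k, S *m x = 0 & {in vs, forall v, (v *m x) 0 0 != 0}.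
Proof.
elim: vs => [|v vs IHvs] vs_notin; first by exists 0; rewrite ?mulmx0.
have [x Sx vs_x] := IHvs (fun u us => vs_notin u (mem_behead (s := v :: vs) us)).
have [y Sy v_y] := kernel_vector_notin (vs_notin v (mem_head v vs)).
have [c c_ok] :=
  affine_common_nonroot (fun u => (u *m x) 0 0) (fun u => (u *m y) 0 0) (v :: vs).
exists (x + c *: y) => [|u us].
  by rewrite mulmxDr -scalemxAr Sx Sy scaler0 addr0.
rewrite mulmxDr -scalemxAr mxE [(c *: (u *m y)) 0 0]mxE c_ok //.
by move: us; rewrite inE => /orP[/eqP-> | /vs_x->]; rewrite ?v_y ?orbT.
Qed.

End KernelVectors.

Lemma rat_scale_int (I : finType) (q : I -> rat) :
  exists2 m : nat, (0 < m)%N & forall i, m%:R * q i \is a Num.int.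
Proof.
exists (\prod_i `|denq (q i)|)%N => [|i].
  by rewrite prodn_gt0 // => i; rewrite absz_gt0 denq_neq0.
rewrite (bigD1 i) //= natrM -mulrA natr_absz gtr0_norm ?denq_gt0 //.
by rewrite mulrCA [_%:~R * q i]mulrC -numqE rpredM ?rpred_nat ?rpred_int.
Qed.

Lemma theta_gt_mulrn_eq0 (G : zmodType) N (x : G) m :
  theta_gt G N -> (0 < m <= N)%N -> (x *+ m == 0) = (x == 0).
Proof.
move=> thetaG /andP[m_gt0 le_mN].
have [-> | x0] := eqVneq x 0; first by rewrite mul0rn eqxx.
case: (thetaG x x0) => [x_inf | [n [[_ [_ x_ord]] lt_Nn]]]; first exact/negbTE/x_inf.
by apply/negbTE/x_ord; rewrite m_gt0 (leq_ltn_trans le_mN).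
Qed.

Definition intcomb {V : zmodType} k (c : 'I_k -> int) (g : 'I_k -> V) : V :=
  \sum_l g l *~ c l.

Section IntegerModel.
Variables (J : finType) (k : nat) (coef : J -> 'I_k -> int).

Definition coef_row (j : J) : 'rV[rat]_k := \row_l (coef j l)%:~R.
Definition coef_span (Z : {set J}) : 'M[rat]_k := (\sum_(j in Z) <<coef_row j>>)%MS.

Definition int_span_multiple (Z : {set J}) (c : J) (m : nat) :=
  exists u : J -> int, forall l, coef c l * m%:Z = \sum_(j in Z) coef j l * u j.

Lemma coef_span_int_multiple Z c : (coef_row c <= coef_span Z)%MS ->
  exists2 m : nat, (0 < m)%N & int_span_multiple Z c m.
Proof.
case/sub_sums_genmxP => u_ Ec.
have [m m_gt0 mu_int] := rat_scale_int (fun j => u_ j 0 0).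
exists m => //; exists (fun j => numq (m%:R * u_ j 0 0)) => l.
apply: (@intr_inj rat); rewrite intrM rmorph_sum /= mulrC.
move/rowP: Ec => /(_ l); rewrite !mxE summxE => ->.
rewrite mulr_sumr; apply: eq_bigr => j _.
by rewrite intrM numqK // mxE big_ord1 mxE [RHS]mulrC mulrA -pmulrn.
Qed.

Lemma intcomb_span_multiple (V : zmodType) (g : 'I_k -> V) Z c m :
    int_span_multiple Z c m -> {in Z, forall j, intcomb (coef j) g = 0} ->
  intcomb (coef c) g *+ m = 0.
Proof.
case=> u rel Zg; rewrite /intcomb -sumrMnl.
under eq_bigr => l _ do rewrite pmulrn -mulrzA rel mulrz_sumr.
rewrite exchange_big big1 // => j /Zg Zj.
under eq_bigr => l _ do rewrite mulrzA.
by rewrite -mulrz_suml -/(intcomb _ _) Zj mul0rz.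
Qed.

Lemma span_multiplier_bound : exists B : nat, forall Z c,
  (coef_row c <= coef_span Z)%MS ->
  exists2 m : nat, (0 < m <= B)%N & int_span_multiple Z c m.
Proof.
have multiplier (Zc : {set J} * J) : exists m : nat,
    (coef_row Zc.2 <= coef_span Zc.1)%MS -> (0 < m)%N /\ int_span_multiple Zc.1 Zc.2 m.
  case: Zc => Z c /=; case: (boolP (coef_row c <= coef_span Z)%MS) => [cZ | _].
    by have [m m_gt0 c_mult] := coef_span_int_multiple cZ; exists m.
  by exists 0%N.
have [mf mf_ok] := fin_all_exists multiplier.
exists (\max_Zc mf Zc)%N => Z c /(mf_ok (Z, c))[m_gt0 rel].
by exists (mf (Z, c)); rewrite ?m_gt0 ?leq_bigmax.
Qed.

Lemma intcomb_int_model : exists N, (0 < N)%N /\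
  forall G : zmodType, theta_gt G N -> forall g : 'I_k -> G,
    exists w : 'I_k -> int,
      forall c, (intcomb (coef c) g == 0) = (intcomb (coef c) w == 0).
Proof.
have [B B_ok] := span_multiplier_bound.
exists B.+1; split=> // G thetaG g.
pose Z := [set j | intcomb (coef j) g == 0].
have notin_span c : c \notin Z -> ~~ (coef_row c <= coef_span Z)%MS.
  rewrite inE; apply: contra => /B_ok[m /andP[m_gt0 le_mB] c_mult].
  rewrite -(theta_gt_mulrn_eq0 _ thetaG (m := m)) ?m_gt0 ?(leq_trans le_mB) //.
  by rewrite (intcomb_span_multiple c_mult) // => j; rewrite inE => /eqP.
pose vs := [seq coef_row c | c <- enum J & c \notin Z].
have [x Zx vs_x] : exists2 x : 'cV_k,
    coef_span Z *m x = 0 & {in vs, forall v, (v *m x) 0 0 != 0}.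
  apply: kernel_vector_avoiding => v /mapP[c]; rewrite mem_filter => /andP[cZ _] ->.
  exact: notin_span.
have [d d_gt0 dx_int] := rat_scale_int (fun l => x l 0).
pose w l := numq (d%:R * x l 0).
exists w => c.
have intcombE : (intcomb (coef c) w)%:~R = d%:R * (coef_row c *m x) 0 0 :> rat.
  rewrite /intcomb rmorph_sum mxE mulr_sumr; apply: eq_bigr => l _ /=.
  by rewrite rmorphMz /= numqK // -mulrzr mxE -mulrA [_ * x l 0]mulrC.
have -> : (intcomb (coef c) w == 0) = ((intcomb (coef c) w)%:~R == 0 :> rat).
  by rewrite intr_eq0.
rewrite intcombE mulf_eq0 pnatr_eq0 (gtn_eqF d_gt0) /=.
have [cZ | cZ] := boolP (c \in Z).
  have /submxP[D ->] : (coef_row c <= coef_span Z)%MS by rewrite (sumsmx_sup c) ?genmxE.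
  by rewrite -mulmxA Zx mulmx0 mxE eqxx; move: cZ; rewrite inE.
rewrite (negbTE (vs_x _ _)); first by move: cZ; rewrite inE => /negbTE.
by apply: map_f; rewrite mem_filter cZ mem_enum.
Qed.

End IntegerModel.

Definition subset_coef k (PQ : {set 'I_k} * {set 'I_k}) (l : 'I_k) : int :=
  (l \in PQ.1)%:Z - (l \in PQ.2)%:Z.

Lemma intcomb_subset_coef (V : zmodType) k (g : 'I_k -> V) PQ :
  intcomb (subset_coef PQ) g = \sum_(l in PQ.1) g l - \sum_(l in PQ.2) g l.
Proof.
rewrite /intcomb !(big_mkcond (fun l => l \in _)) -sumrB; apply: eq_bigr => l _.
by rewrite /subset_coef mulrzBr; case: (l \in PQ.1); case: (l \in PQ.2).
Qed.

Lemma subset_sum_int_model k : exists N, (0 < N)%N /\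
  forall G : zmodType, theta_gt G N -> forall g : 'I_k -> G,
    exists w : 'I_k -> int, subset_sum_equiv g w.
Proof.
have [N [N_gt0 model]] := intcomb_int_model (@subset_coef k).
exists N; split=> // G thetaG g; have [w gw] := model G thetaG g.
by exists w => P Q; have := gw (P, Q); rewrite !intcomb_subset_coef !subr_eq0.
Qed.

Lemma intr_Zp_eq0 p (z : int) :
  (1 < p)%N -> (`|z| < p)%N -> ((z%:~R : 'Z_p) == 0) = (z == 0).
Proof.
move=> p_gt1 lt_zp; have -> : (z%:~R : 'Z_p) == 0 = ((`|z|%N)%:R == 0 :> 'Z_p).
  by case: z {lt_zp} => n //; rewrite NegzE mulrNz oppr_eq0.
by rewrite -val_eqE /= val_Zp_nat // modn_small // absz_eq0.
Qed.

Lemma norm_intcomb_subset_coef k (w : 'I_k -> int) PQ :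
  `|intcomb (subset_coef PQ) w| <= \sum_l `|w l|.
Proof.
rewrite /intcomb (le_trans (ler_norm_sum _ _ _)) // ler_sum // => l _.
rewrite -mulrzr normrM ler_piMr // /subset_coef.
by case: (l \in PQ.1); case: (l \in PQ.2).
Qed.

Lemma subset_sum_equiv_Zp k (w : 'I_k -> int) p :
    (1 < p)%N -> (\sum_l `|w l| < p)%N ->
  subset_sum_equiv w (fun l => (w l)%:~R : 'Z_p).
Proof.
move=> p_gt1 lt_wp P Q; rewrite -subr_eq0 -[in RHS]subr_eq0 -!rmorph_sum -rmorphB /=.
rewrite -(intcomb_subset_coef _ (P, Q)) intr_Zp_eq0 // (leq_ltn_trans _ lt_wp) //.
rewrite -lez_nat abszE (big_morph Posz PoszD (erefl 0%:Z)).
by under eq_bigr do rewrite abszE; exact: norm_intcomb_subset_coef.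
Qed.

Lemma sum_count_bijective (T : Type) (X : eqType) t (h : 'I_t -> X) (key : T -> X)
    (s : seq T) :
  bijective h -> (\sum_(i < t) count (fun z => key z == h i) s)%N = size s.
Proof.
case=> h' hK h'K; elim: s => [|z s IHs] /=; first by rewrite big1.
rewrite big_split /= IHs (bigD1 (h' (key z))) //= h'K eqxx big1 // => i ne_i.
by case: eqP => // Ez; move: ne_i; rewrite Ez hK eqxx.
Qed.

Lemma codom_nth (T : Type) (x0 : T) (s : seq T) n :
  size s = n -> codom (fun l : 'I_n => nth x0 s l) = s.
Proof.
move=> <-; rewrite codomE -[LHS]/(map (nth x0 s \o val) _) map_comp val_enum_ord.
exact: mkseq_nth.
Qed.

Theorem theorem4p6 (H : finZmodType) (t : nat) (h : 'I_t -> H)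
    (h_bij : bijective h) (h_0 : forall i : 'I_t, nat_of_ord i = 0%N -> h i = 0)
    (lam : 'I_t -> nat) :
  (forall M : nat, exists p : nat,
      (M < p)%N /\ prime p /\ all_nzs_type_sequenceable 'Z_p h lam) ->
  exists N : nat, (0 < N)%N /\
    forall G : zmodType, theta_gt G N -> all_nzs_type_sequenceable G h lam.
Proof.
move=> large_primes; set k := (\sum_i lam i)%N.
have [N [N_gt0 model]] := subset_sum_int_model k.
exists N; split=> // G thetaG s s_uniq s_0 s_sum s_type.
have size_s : size s = k.
  by rewrite -(sum_count_bijective (fun z : G * H => z.2) s h_bij); apply: eq_bigr.
pose x (l : 'I_k) := nth 0 s l.
have [w gw] := model G thetaG (fun l => (x l).1).
have [p [lt_wp [p_prime p_ok]]] := large_primes (\sum_l `|w l|)%N.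
have xy := subset_sum_equiv_pair
  (subset_sum_equiv_trans gw (subset_sum_equiv_Zp (prime_gt1 p_prime) lt_wp)).
rewrite -(codom_nth 0 size_s) in s_uniq s_0 s_sum s_type *.
exact: nzs_type_sequenceable_transfer p_ok xy (fun l => erefl) s_uniq s_0 s_sum s_type.
Qed.
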